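(* Every finite group with nonabelian monolith is strongly verbally closed. Moreover, every such group $H$ is a retract of every finite group $G$ that contains $H$ and satisfies all identities of $H$.
   Context: The monolith of a group is the intersection of all its nonidentity normal subgroups. A subgroup $H$ of $G$ is a retract of $G$ if there is an endomorphism $\rho$ of $G$ with $\rho\circ\rho=\rho$ and $\rho(G)=H$. A subgroup $H$ of $G$ is verbally closed if every equation $w(x_1,\dots,x_n)=h$ with $w$ in a free group and $h\in H$ solvable in $G$ is solvable in $H$; algebraically closed if every finite system of equations with coefficients from $H$ solvable in $G$ is solvable in $H$. A group is strongly verbally closed if it is algebraically closed in every group containing it as a verbally closed subgroup. *)

From mathcomp Require Import all_boot all_fingroup.
Set Implicit Arguments. Unset Strict Implicit. Unset Printing Implicit Defensive.

Record Grp := MkGrp {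
  gcar :> Type;
  gmul : gcar -> gcar -> gcar;
  ginv : gcar -> gcar;
  gone : gcar;
  gmulA : forall x y z, gmul x (gmul y z) = gmul (gmul x y) z;
  gmul1 : forall x, gmul gone x = x;
  gmulV : forall x, gmul (ginv x) x = gone
}.

Inductive word (C : Type) : Type :=
| wvar of nat
| wcst of C
| wone
| wmul of word C & word C
| winv of word C.
Arguments wone {C}.

Fixpoint weval (G : Grp) (C : Type) (c : C -> G) (a : nat -> G) (w : word C) : G :=
  match w with
  | wvar i => a i
  | wcst k => c k
  | wone => gone G
  | wmul u v => gmul (weval c a u) (weval c a v)
  | winv u => ginv (weval c a u)
  end.

Definition fword := word Empty_set.
Definition noconst (G : Grp) : Empty_set -> G := fun e => match e with end.

Definition verbally_closed (G : Grp) (S : G -> Prop) : Prop :=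
  forall (w : fword) (h : G), S h ->
    (exists a : nat -> G, weval (noconst G) a w = h) ->
    exists a : nat -> G, (forall i, S (a i)) /\ weval (noconst G) a w = h.

Definition algebraically_closed (G : Grp) (S : G -> Prop) : Prop :=
  forall (n : nat) (sys : 'I_n -> word {x : G | S x} * word {x : G | S x}),
    (exists a : nat -> G, forall k,
        weval (@proj1_sig _ _) a (sys k).1 = weval (@proj1_sig _ _) a (sys k).2) ->
    exists a : nat -> G, (forall i, S (a i)) /\ forall k,
        weval (@proj1_sig _ _) a (sys k).1 = weval (@proj1_sig _ _) a (sys k).2.

(* The group (K,S) (S a subgroup of K) is strongly verbally closed: for every
   group G and every embedding f of S into G such that f(S) is verbally closed
   in G, f(S) is algebraically closed in G. *)
Definition strongly_verbally_closed (K : Grp) (S : K -> Prop) : Prop :=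
  forall (G : Grp) (f : K -> G),
    (forall x y, S x -> S y -> f (gmul x y) = gmul (f x) (f y)) ->
    (forall x y, S x -> S y -> f x = f y -> x = y) ->
    verbally_closed (fun g => exists2 x, S x & f x = g) ->
    algebraically_closed (fun g => exists2 x, S x & f x = g).

Arguments strongly_verbally_closed : clear implicits.

Definition fingrp (gT : finGroupType) : Grp :=
  @MkGrp gT mulg invg 1%g (@mulgA gT) (@mul1g gT) (@mulVg gT).

Local Open Scope group_scope.

(* Monolith: intersection of all nonidentity normal subgroups of H
   (intersected with H so that the empty intersection is H itself). *)
Definition monolith (gT : finGroupType) (H : {set gT}) : {set gT} :=
  H :&: \bigcap_(N : {group gT} | (N <| H) && (N :!=: 1)) N.

Definition satisfies_identities_of (gT : finGroupType) (H G : {set gT}) : Prop :=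
  forall u v : fword,
    (forall a : nat -> gT, (forall i, a i \in H) ->
        weval (noconst (fingrp gT)) a u = weval (noconst (fingrp gT)) a v) ->
    (forall a : nat -> gT, (forall i, a i \in G) ->
        weval (noconst (fingrp gT)) a u = weval (noconst (fingrp gT)) a v).

Definition retract (gT : finGroupType) (G H : {set gT}) : Prop :=
  exists rho : gT -> gT,
    {in G &, {morph rho : x y / x * y}} /\
    {in G, forall x, rho (rho x) = rho x} /\
    rho @: G = H.

(* Retract: choose [J] maximal among the normal subgroups of [G] meeting [H] trivially.
   As the monolith of [H] is nonabelian, [J] is prime: [[A, B] \subset J] forces
   [A \subset J] or [B \subset J] for normal [A], [B].  For a set [S] of [H]-valued
   assignments let [K S] be the values, at an enumeration of [G], of the words vanishing on
   [S]; then [K set0 = G], [K setT = 1] since [G] satisfies the laws of [H], and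
   [[K S, K T] \subset K (S :|: T)].  Primeness yields one assignment [t] with
   [K [set t] \subset J], i.e. [z |-> t z] separates the cosets of [J]; so
   [#|G : J| <= #|H|], [H] complements [J], and the projection along [J] is a retraction.

   Strong verbal closedness: take the relatively free group [P] of the variety of [H] on
   the constants and the unknowns of a system, modulo the words [R] vanishing at a
   solution in the overgroup.  [H] embeds in [P / R]: if [h] dies there, the image of [h]
   in the overgroup is the value of a word that is a law of [H], and verbal closedness
   moves this equation into [H], where the law forces [h = 1].  As [P / R] satisfies the laws of
   [H], it retracts onto the copy of [H], and the retraction maps the unknowns to a
   solution in [H]. *)

From mathcomp Require Import all_boot all_fingroup.
From mathcomp Require boolp.
Set Implicit Arguments. Unset Strict Implicit. Unset Printing Implicit Defensive.
Local Open Scope group_scope.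

Local Notation ev a w := (weval (noconst (fingrp _)) a w).

Fixpoint wvars (C : Type) (w : word C) : nat :=
  match w with
  | wvar i => i.+1
  | wcst _ | wone => 0
  | wmul u v => maxn (wvars u) (wvars v)
  | winv u => wvars u
  end.

Definition wconj (C : Type) (u v : word C) := wmul (winv v) (wmul u v).
Definition wcomm (C : Type) (u v : word C) := wmul (winv u) (wconj u v).

Lemma weval_eq_on (G : Grp) (C : Type) (c : C -> G) a b w :
  (forall i, i < wvars w -> a i = b i) -> weval c a w = weval c b w.
Proof.
elim: w => //= [i -> // | u IHu v IHv | u IHu] eq_ab; last by rewrite IHu.
by rewrite IHu ?IHv // => i lt_i; apply: eq_ab; rewrite leq_max lt_i ?orbT.
Qed.

Lemma wevalJ (gT : finGroupType) (a : nat -> gT) (u v : fword) :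
  ev a (wconj u v) = ev a u ^ ev a v.
Proof. by rewrite /conjg /= mulgA. Qed.

Lemma wevalR (gT : finGroupType) (a : nat -> gT) (u v : fword) :
  ev a (wcomm u v) = [~ ev a u, ev a v].
Proof. by rewrite /= -/(ev a u ^ ev a v) -wevalJ. Qed.

Section GrpTheory.
Variable G : Grp.
Implicit Types x y z : G.

Lemma gmulI x y z : gmul x y = gmul x z -> y = z.
Proof. by move=> e; rewrite -(gmul1 y) -(gmulV x) -gmulA e gmulA gmulV gmul1. Qed.

Lemma gmulVr x : gmul x (ginv x) = gone G.
Proof.
rewrite -[gmul x _]gmul1 -(gmulV (ginv x)) -gmulA (gmulA (ginv x)) gmulV gmul1.
by rewrite gmulV.
Qed.

Lemma gmulg1 x : gmul x (gone G) = x.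
Proof. by rewrite -(gmulV x) gmulA gmulVr gmul1. Qed.

Lemma ginv1 : ginv (gone G) = gone G.
Proof. by rewrite -[ginv _]gmulg1 gmulV. Qed.

End GrpTheory.

Section WordMorphism.
Variables (aT : finGroupType) (rT : Grp) (D : {group aT}) (h : aT -> rT).
Hypothesis hM : {in D &, forall x y, h (x * y) = gmul (h x) (h y)}.

Lemma gmorph1 : h 1 = gone rT.
Proof. by apply: (@gmulI _ (h 1)); rewrite -hM ?mulg1 ?gmulg1. Qed.

Lemma gmorphV x : x \in D -> h x^-1 = ginv (h x).
Proof.
by move=> Dx; apply: (@gmulI _ (h x)); rewrite -hM ?groupV // mulgV gmulVr gmorph1.
Qed.

Lemma weval_in_group (a : nat -> aT) w : (forall i, a i \in D) -> ev a w \in D.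
Proof.
move=> Da; elim: w => /= [//|[]||u Du v Dv|u Du]; first exact: group1.
  exact: groupM.
by rewrite groupV.
Qed.

Lemma weval_morph (a : nat -> aT) w : (forall i, a i \in D) ->
  h (ev a w) = weval (noconst rT) (fun i => h (a i)) w.
Proof.
move=> Da; elim: w => /= [//|[]||u IHu v IHv|u IHu].
- exact: gmorph1.
- by rewrite hM ?weval_in_group // IHu IHv.
- by rewrite gmorphV ?weval_in_group // IHu.
Qed.

End WordMorphism.

Lemma weval_morphism (aT rT : finGroupType) (D : {group aT})
    (f : {morphism D >-> rT}) (a : nat -> aT) w :
  (forall i, a i \in D) -> f (ev a w) = ev (fun i => f (a i)) w.
Proof. exact: (@weval_morph aT (fingrp rT) D f (@morphM _ _ D f)). Qed.

Definition is_law (gT : finGroupType) (A : {set gT}) (u v : fword) :=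
  forall a : nat -> gT, (forall i, a i \in A) -> ev a u = ev a v.

Section Laws.
Variables (aT rT : finGroupType) (D : {group aT}) (f : {morphism D >-> rT}).
Variables (A : {group aT}) (u v : fword).
Hypothesis sAD : A \subset D.

Lemma is_law_morphim : is_law A u v -> is_law (f @* A) u v.
Proof.
move=> lawA b fAb; pose s i := odflt 1 [pick x in A | f x == b i].
have [As fs] : (forall i, s i \in A) /\ (forall i, f (s i) = b i).
  apply: all_and2 => i; rewrite /s; case: pickP => [x /andP[Ax /eqP] | noA] //=.
  by case/morphimP: (fAb i) => x _ Ax fx; move/(_ x): noA; rewrite /= Ax fx eqxx.
have Ds i : s i \in D by exact: subsetP sAD _ (As i).
have ev_b w : ev b w = f (ev s w).
  by rewrite weval_morphism //; apply: weval_eq_on => i _; rewrite fs.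
by rewrite !ev_b lawA.
Qed.

Lemma is_law_injm : 'injm f -> is_law (f @* A) u v -> is_law A u v.
Proof.
move=> injf lawfA a Aa; have Da i : a i \in D by exact: subsetP sAD _ (Aa i).
apply: (injmP injf); rewrite ?weval_in_group // !weval_morphism //.
by apply: lawfA => i; apply: mem_morphim.
Qed.

End Laws.

Lemma weval_dffun (I : finType) (gT : I -> finGroupType)
    (b : nat -> {dffun forall i, gT i}) w t :
  ev b w t = ev (fun i => b i t) w.
Proof.
by apply: (@weval_morphism _ _ [set: _]%G (dffun_morphism gT t)) => i; rewrite inE.
Qed.

Lemma is_law_setXn (gT : finGroupType) (I : finType) (A : {group gT}) u v :
  is_law A u v -> is_law (setXn (fun _ : I => A)) u v.
Proof.
move=> lawA b Ab; apply/ffunP => t; rewrite !weval_dffun lawA // => i.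
by have := Ab i; rewrite inE => /forallP.
Qed.

Section Monolith.
Variable gT : finGroupType.
Implicit Types H N : {group gT}.

Lemma monolith_subG H : monolith H \subset H.
Proof. exact: subsetIl. Qed.

Lemma monolith_sub H N : N <| H -> N :!=: 1 -> monolith H \subset N.
Proof. by move=> nNH ntN; rewrite subIset // (bigcap_inf N) ?orbT // nNH. Qed.

End Monolith.

Section InjmMonolith.
Variables (aT rT : finGroupType) (D H : {group aT}) (f : {morphism D >-> rT}).
Hypotheses (injf : 'injm f) (sHD : H \subset D).

Lemma injm_monolith : f @* monolith H \subset monolith (f @* H).
Proof.
have sMD := subset_trans (monolith_subG H) sHD.
rewrite subsetI morphimS ?monolith_subG //=; apply/bigcapsP => N /andP[nNfH ntN].
have sfHD := morphimS f sHD.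
have sNfD := subset_trans (normal_sub nNfH) sfHD.
rewrite sub_morphim_pre // monolith_sub //.
  by rewrite -(injmK injf sHD) morphpre_normal.
by apply: contra ntN => /eqP trivN; rewrite -(morphpreK sNfD) trivN morphim1.
Qed.

Lemma injm_nonabelian_monolith :
  ~~ abelian (monolith H) -> ~~ abelian (monolith (f @* H)).
Proof.
apply: contra => abM; rewrite -(injm_abelian injf (subset_trans (monolith_subG H) sHD)).
exact: abelianS injm_monolith abM.
Qed.

End InjmMonolith.

Section WordValues.
Variables (gT : finGroupType) (a : nat -> gT).
Implicit Types W : fword -> Prop.

Definition word_values W : {set gT} :=
  [set z | boolp.asbool (exists2 w, W w & ev a w = z)].

Lemma word_valuesP W z : reflect (exists2 w, W w & ev a w = z) (z \in word_values W).
Proof. by rewrite inE; apply: boolp.asboolP. Qed.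

Lemma mem_word_values W w : W w -> ev a w \in word_values W.
Proof. by move=> Ww; apply/word_valuesP; exists w. Qed.

Lemma group_set_word_values W :
  W wone -> (forall u v, W u -> W v -> W (wmul u v)) -> group_set (word_values W).
Proof.
move=> W1 WM; apply/group_setP; split; first exact: (mem_word_values W1).
move=> _ _ /word_valuesP[u Wu <-] /word_valuesP[v Wv <-].
exact: (mem_word_values (WM _ _ Wu Wv)).
Qed.

Lemma word_values_norm W W' :
  (forall u v, W u -> W' v -> W (wconj u v)) -> word_values W' \subset 'N(word_values W).
Proof.
move=> WJ; apply/subsetP => _ /word_valuesP[v W'v <-]; rewrite inE.
apply/subsetP => _ /imsetP[_ /word_valuesP[u Wu <-] ->].
by rewrite -wevalJ; apply/mem_word_values/WJ.
Qed.

Lemma word_values_commg W1 W2 (K : {group gT}) :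
  (forall u v, W1 u -> W2 v -> ev a (wcomm u v) \in K) ->
  [~: word_values W1, word_values W2] \subset K.
Proof.
move=> WR; rewrite gen_subG; apply/subsetP => _ /imset2P[x y Ax By ->].
case/word_valuesP: Ax => u Wu <-; case/word_valuesP: By => v Wv <-.
by rewrite -wevalR WR.
Qed.

End WordValues.

Section MaximalComplement.
Variables (gT : finGroupType) (G H J : {group gT}).
Hypotheses (nabH : ~~ abelian (monolith H)) (sHG : H \subset G).
Hypothesis maxJ : [max J | (J <| G) && (J :&: H == 1)].

Let nJG : J <| G. Proof. by case/andP: (maxgroupp maxJ). Qed.
Let tiJH : J :&: H = 1. Proof. by case/andP: (maxgroupp maxJ) => _ /eqP. Qed.

Lemma maxcomplement_prime (A B : {group gT}) :
  A <| G -> B <| G -> [~: A, B] \subset J -> (A \subset J) || (B \subset J).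
Proof.
(* Otherwise [A <*> J] and [B <*> J] meet [H] nontrivially by maximality of [J], so
   both contain the monolith, whose commutator subgroup then lies in [J :&: H = 1]. *)
move=> nAG nBG sABJ; apply/norP => -[nsAJ nsBJ]; case/negP: nabH.
have nJ := normal_norm nJG.
have sMJ (X : {group gT}) : X <| G -> ~~ (X \subset J) -> monolith H \subset X <*> J.
  move=> nXG nsXJ; have nXJ_H := normalGI sHG (normalY nXG nJG).
  apply: subset_trans (subsetIr H _); apply: monolith_sub nXJ_H _.
  apply: contra nsXJ => /eqP tiXJ.
  have defXJ : X <*> J = J.
    apply: (maxgroupP maxJ).2; last exact: joing_subr.
    by rewrite /= normalY //= setIC tiXJ.
  by rewrite -defXJ joing_subl.
have nJX (X : {group gT}) : X <| G -> X \subset 'N(J).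
  by move=> nXG; apply: subset_trans (normal_sub nXG) nJ.
have nJXJ (X : {group gT}) : X <| G -> X <*> J \subset 'N(J).
  by move=> nXG; rewrite join_subG nJX ?normG.
have sRJ : [~: A <*> J, B <*> J] \subset J.
  rewrite -quotient_sub1 ?comm_subG ?nJXJ // quotientR ?nJXJ // !quotientYidr ?nJX //.
  by rewrite -quotientR ?nJX // quotient_sub1 // comm_subG ?nJX.
apply/commG1P/trivgP; rewrite -tiJH subsetI (subset_trans _ sRJ) ?commgSS ?sMJ //.
by rewrite comm_subG ?monolith_subG.
Qed.

Lemma maxcomplement_family (I : finType) (K : {set I} -> {group gT}) :
  (forall S, K S <| G) -> (forall S1 S2, [~: K S1, K S2] \subset K (S1 :|: S2)) ->
  ~~ (K set0 \subset J) -> K setT \subset J -> exists i, K [set i] \subset J.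
Proof.
move=> nKG sKR nsK0J sKTJ; case: (pickP (fun i => K [set i] \subset J)) => [i | nsKJ].
  by exists i.
suff nsKsJ s : ~~ (K [set:: s] \subset J).
  by case/negP: (nsKsJ (enum [set: I])); rewrite set_enum.
elim: s => [|i s IHs]; first by rewrite set_nil.
rewrite set_cons; apply: contra (subset_trans (sKR _ _)) _.
by apply/negP => /(maxcomplement_prime (nKG _) (nKG _)); rewrite nsKJ (negbTE IHs).
Qed.

End MaximalComplement.

Lemma retract_of_complement (gT : finGroupType) (G H J : {group gT}) :
  J <| G -> J :&: H = 1 -> J * H = G -> retract G H.
Proof.
move=> nJG tiJH defG; have cHJ : H \in [complements to J in G] by apply/complP.
have remH z : z \in G -> remgr J H z \in H by rewrite -defG; apply: mem_remgr.
exists (remgr J H); split; first exact: remgrM.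
split=> [z Gz | ]; first by rewrite remgr_id ?remH.
apply/eqP; rewrite eqEsubset; apply/andP; split.
  by apply/subsetP => _ /imsetP[z Gz ->]; apply: remH.
apply/subsetP => h Hh; apply/imsetP; exists h; last by rewrite remgr_id.
by rewrite -defG (subsetP (mulG_subr J H)).
Qed.

Section RelativelyFree.
Variables (gT : finGroupType) (H : {group gT}) (N : nat).

(* Variables beyond [N] and coordinates outside [H] are sent to [1]. *)
Definition hassign (t : {ffun 'I_N -> gT}) (i : nat) : gT :=
  if insub i is Some j then (if t j \in H then t j else 1) else 1.

Definition free_gen (i : nat) : {dffun {ffun 'I_N -> gT} -> gT} := [ffun t => hassign t i].

Lemma hassign_in t i : hassign t i \in H.
Proof. by rewrite /hassign; case: insub => [j|]; [case: ifP | rewrite group1]. Qed.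

Lemma free_gen_apply w t : ev free_gen w t = ev (hassign t) w.
Proof. by rewrite weval_dffun; apply: (@weval_eq_on (fingrp gT)) => i _; rewrite ffunE. Qed.

Lemma free_gen_law w : wvars w <= N -> ev free_gen w = 1 -> is_law H w wone.
Proof.
move=> bw w1 s Hs; pose t : {ffun 'I_N -> gT} := [ffun j : 'I_N => s j].
have := congr1 (fun p : {dffun {ffun 'I_N -> gT} -> gT} => p t) w1.
rewrite oneg_ffun free_gen_apply => E.
apply: etrans E; apply: (@weval_eq_on (fingrp gT)) => i /leq_trans/(_ bw) ltiN.
by rewrite /hassign insubT /= ffunE Hs.
Qed.

(* The relatively free group of rank [N] of the variety generated by [H]. *)
Definition free_group := word_values free_gen (fun w => wvars w <= N).

Lemma group_set_free_group : group_set free_group.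
Proof. by apply: group_set_word_values => // u v bu bv /=; rewrite geq_max bu. Qed.

Canonical free_group_group := Group group_set_free_group.

Lemma free_gen_in i : free_gen i \in free_group.
Proof.
have [ltiN | leNi] := ltnP i N; first exact: (@mem_word_values _ _ _ (wvar _ i)).
suff -> : free_gen i = 1 by apply: group1.
by apply/ffunP => t; rewrite !ffunE /hassign insubF // ltnNge leNi.
Qed.

Lemma free_group_law u v : is_law H u v -> is_law free_group u v.
Proof.
move=> lawH b Fb; apply: (is_law_setXn (I := {ffun 'I_N -> gT}) lawH) => i.
case/word_valuesP: (Fb i) => w _ <-; rewrite inE; apply/forallP => t.
by rewrite free_gen_apply; apply: weval_in_group => j; apply: hassign_in.
Qed.

End RelativelyFree.

Lemma indexg_le_imset (gT : finGroupType) (T : finType) (G J : {group gT})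
    (phi : gT -> T) :
  {in G &, forall z z', phi z = phi z' -> z * z'^-1 \in J} -> #|G : J| <= #|phi @: G|.
Proof.
move=> phiJ; pose F y := J :* odflt 1 [pick z in G | phi z == y].
have eqF : {in G, forall z, rcoset J z = F (phi z)}.
  move=> z Gz; rewrite /F; case: pickP => [z' /andP[Gz' /eqP ez] | /(_ z)] /=; last first.
    by rewrite Gz eqxx.
  by rewrite rcosetE; apply/rcoset_eqP; rewrite mem_rcoset phiJ.
rewrite /indexg /rcosets (eq_in_imset eqF) imset_comp; exact: leq_imset_card.
Qed.

Lemma complement_of_index (gT : finGroupType) (G H J : {group gT}) :
  J \subset G -> H \subset G -> J :&: H = 1 -> #|G : J| <= #|H| -> J * H = G.
Proof.
move=> sJG sHG tiJH leGJ_H; apply/eqP; rewrite eqEcard mul_subG //= TI_cardMg //.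
by rewrite -(Lagrange sJG) leq_mul2l leGJ_H orbT.
Qed.

Lemma index_enum_lt (T : finType) (A : {set T}) x : x \in A -> index x (enum A) < #|A|.
Proof. by move=> Ax; rewrite cardE index_mem mem_enum. Qed.

Lemma nth_enum_group (gT : finGroupType) (A : {group gT}) i : nth 1 (enum A) i \in A.
Proof.
have [lti | lei] := ltnP i (size (enum A)); first by rewrite -mem_enum mem_nth.
by rewrite nth_default.
Qed.

Section RetractOfIdentities.
Variables (gT : finGroupType) (H G : {group gT}).
Hypotheses (nabH : ~~ abelian (monolith H)) (sHG : H \subset G).
Hypothesis lawsG : satisfies_identities_of H G.

Let N := #|G|.
Let g i := nth 1 (enum G) i.
Let idx z := index z (enum G).

Let g_idx z : z \in G -> g (idx z) = z.
Proof. by move=> Gz; rewrite /g nth_index ?mem_enum. Qed.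

Let vanishing_on (S : {set {ffun 'I_N -> gT}}) (w : fword) :=
  wvars w <= N /\ {in S, forall t, ev (free_gen H N) w t = 1}.

Let vanishing_on1 S : vanishing_on S wone.
Proof. by split=> // t _; rewrite free_gen_apply. Qed.

Let vanishing_onM S u v :
  vanishing_on S u -> vanishing_on S v -> vanishing_on S (wmul u v).
Proof.
move=> [bu u1] [bv v1]; split=> [|t St]; first by rewrite geq_max bu.
by move: (u1 t St) (v1 t St); rewrite !free_gen_apply /= => -> ->; rewrite mulg1.
Qed.

Let K S := Group (group_set_word_values g (@vanishing_on1 S) (@vanishing_onM S)).

Let G_sub_bounded : G \subset word_values g (fun w => wvars w <= N).
Proof.
apply/subsetP => z Gz; rewrite -(g_idx Gz).
by apply: (@mem_word_values _ _ _ (wvar _ (idx z))); apply: index_enum_lt.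
Qed.

Let K_normal S : K S <| G.
Proof.
apply/andP; split.
  apply/subsetP => _ /word_valuesP[w _ <-].
  by apply: weval_in_group => i; apply: nth_enum_group.
apply: subset_trans G_sub_bounded (word_values_norm _ _) => u v [bu u1] bv.
split=> [|t St]; first by rewrite /= !geq_max bu bv.
by move: (u1 t St); rewrite !free_gen_apply wevalJ => ->; rewrite conj1g.
Qed.

Let K_commg S1 S2 : [~: K S1, K S2] \subset K (S1 :|: S2).
Proof.
apply: word_values_commg => u v [bu u1] [bv v1]; apply: mem_word_values.
split=> [|t]; first by rewrite /= !geq_max bu bv.
rewrite inE free_gen_apply wevalR => /orP[/u1 | /v1]; rewrite free_gen_apply => ->.
  exact: comm1g.
exact: commg1.
Qed.

Let K_set0 : G \subset K set0.
Proof.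
by apply: subset_trans G_sub_bounded _; apply/subsetP => _ /word_valuesP[w bw <-];
  apply: mem_word_values; split=> // t; rewrite inE.
Qed.

Let K_setT : K setT \subset [1].
Proof.
apply/subsetP => _ /word_valuesP[w [bw w1] <-]; apply/set1P.
have Ew1 : ev (free_gen H N) w = 1 by apply/ffunP => t; rewrite w1 ?inE ?oneg_ffun.
by apply: (lawsG (free_gen_law bw Ew1)) => i; apply: nth_enum_group.
Qed.

Let K_index (J : {group gT}) t : K [set t] \subset J -> #|G : J| <= #|H|.
Proof.
move=> sKJ; pose phi z := hassign H t (idx z).
apply: leq_trans (indexg_le_imset (phi := phi) _) _.
  move=> z z' Gz Gz' eq_phi; apply: (subsetP sKJ).
  rewrite -(g_idx Gz) -(g_idx Gz').
  apply: (@mem_word_values _ _ _ (wmul (wvar _ (idx z)) (winv (wvar _ (idx z'))))).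
  split=> [|t']; first by rewrite /= geq_max !index_enum_lt.
  by rewrite inE => /eqP ->; rewrite free_gen_apply /= -/(phi z) -/(phi z') eq_phi mulgV.
by apply/subset_leq_card/subsetP => _ /imsetP[z _ ->]; apply: hassign_in.
Qed.

Theorem retract_of_satisfies_identities : retract G H.
Proof.
pose normal_tiH (J : {group gT}) := (J <| G) && (J :&: H == 1).
have normal_tiH1 : normal_tiH 1%G by rewrite /normal_tiH normal1 setI1g eqxx.
have [J maxJ _] := maxgroup_exists normal_tiH1.
have /andP[nJG /eqP tiJH] := maxgroupp maxJ.
have sKTJ := subset_trans K_setT (sub1G J).
have [|t sKtJ] := maxcomplement_family nabH sHG maxJ K_normal K_commg _ sKTJ.
  apply: contra nabH => sK0J; apply: abelianS (monolith_subG H) _.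
  suff /trivgP-> : H \subset [1] by apply: abelian1.
  by rewrite -tiJH subsetI subxx (subset_trans sHG (subset_trans K_set0 sK0J)).
apply: (retract_of_complement nJG tiJH).
exact: complement_of_index (normal_sub nJG) sHG tiJH (K_index sKtJ).
Qed.

End RetractOfIdentities.

Section StronglyVerballyClosed.
Variables (gT : finGroupType) (H : {group gT}).
Hypothesis nabH : ~~ abelian (monolith H).
Variables (G : Grp) (f : gT -> G).
Hypothesis fM : forall x y, x \in H -> y \in H -> f (x * y) = gmul (f x) (f y).
Hypothesis finj : forall x y, x \in H -> y \in H -> f x = f y -> x = y.

Let fH (z : G) := exists2 x, x \in H & f x = z.
Hypothesis vcH : verbally_closed fH.

Variables (m : nat) (sys : 'I_m -> word {z : G | fH z} * word {z : G | fH z}).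
Variable a : nat -> G.
Hypothesis sol :
  forall k, weval (@proj1_sig _ _) a (sys k).1 = weval (@proj1_sig _ _) a (sys k).2.

Let n := #|H|.
Let eH i := nth 1 (enum H) i.
Let idx y := index y (enum H).

Let fM_in : {in H &, forall x y, f (x * y) = gmul (f x) (f y)}.
Proof. by move=> x y; apply: fM. Qed.

Let pre (z : G) : gT := odflt 1 [pick x in H | boolp.asbool (f x = z)].

Let preP z : fH z -> pre z \in H /\ f (pre z) = z.
Proof.
rewrite /pre; case: pickP => [x /andP[Hx /boolp.asboolP] // | noH [x Hx fx]].
by move: (noH x); rewrite /= Hx; case: boolp.asboolP.
Qed.

Fixpoint free_word (w : word {z : G | fH z}) : fword :=
  match w with
  | wvar i => wvar _ (n + i)
  | wcst c => wvar _ (idx (pre (proj1_sig c)))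
  | wone => wone
  | wmul u v => wmul (free_word u) (free_word v)
  | winv u => winv (free_word u)
  end.

Let with_consts (b : nat -> G) (j : nat) : G := if j < n then f (eH j) else b (j - n).

Let with_consts_idx b y : y \in H -> with_consts b (idx y) = f y.
Proof.
by move=> Hy; rewrite /with_consts index_enum_lt // /eH /idx nth_index ?mem_enum.
Qed.

Let weval_free_word b w :
  weval (@proj1_sig _ _) b w = weval (noconst G) (with_consts b) (free_word w).
Proof.
elim: w => //= [i | [z fHz] | u -> v -> | u ->] //.
  by rewrite /with_consts ltnNge leq_addr addKn.
by have [Hy fy] := preP fHz; rewrite with_consts_idx.
Qed.

Let wvars_free_word w : wvars (free_word w) <= n + wvars w.
Proof.
elim: w => //= [i | [z fHz] | u IHu v IHv].
- by rewrite addnS.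
- by have [Hy _] := preP fHz; rewrite (leq_trans _ (leq_addr _ _)) ?index_enum_lt.
- by rewrite geq_max (leq_trans IHu) ?(leq_trans IHv) // leq_add2l ?leq_maxl ?leq_maxr.
Qed.

Let N := n + \max_(k < m) maxn (wvars (sys k).1) (wvars (sys k).2).

Let eqn_word k := wmul (free_word (sys k).1) (winv (free_word (sys k).2)).

Let wvars_eqn_word k : wvars (eqn_word k) <= N.
Proof.
have le_k := @leq_bigmax _ (fun k : 'I_m => maxn (wvars (sys k).1) (wvars (sys k).2)) k.
by rewrite geq_max !(leq_trans (wvars_free_word _)) // leq_add2l
  (leq_trans _ le_k) ?leq_maxl ?leq_maxr.
Qed.

Let idx_ltN y : y \in H -> idx y < N.
Proof. by move=> Hy; rewrite (leq_trans (index_enum_lt Hy)) ?leq_addr. Qed.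

Let P := free_group_group H N.

Let relator r := wvars r <= N /\ weval (noconst G) (with_consts a) r = gone G.

Let relator1 : relator wone. Proof. by []. Qed.

Let relatorM u v : relator u -> relator v -> relator (wmul u v).
Proof. by move=> [bu u1] [bv v1]; split; rewrite /= ?geq_max ?bu ?u1 ?v1 ?gmul1. Qed.

Let R := Group (group_set_word_values (free_gen H N) relator1 relatorM).

Let nRP : P \subset 'N(R).
Proof.
apply: word_values_norm => u v [bu u1] bv; split; first by rewrite /= !geq_max bu bv.
by rewrite /= u1 gmul1 gmulV.
Qed.

Let nR j : free_gen H N j \in 'N(R).
Proof. exact: subsetP nRP _ (free_gen_in H N j). Qed.

Let phi y := coset R (free_gen H N (idx y)).

Let phiM : {in H &, {morph phi : y z / y * z}}.
Proof.
move=> y z Hy Hz; rewrite /phi -morphM //.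
pose w : fword :=
  wmul (winv (wmul (wvar _ (idx y)) (wvar _ (idx z)))) (wvar _ (idx (y * z))).
have Rw : ev (free_gen H N) w \in R.
  apply: mem_word_values; split.
    by rewrite /= !geq_max !idx_ltN ?groupM.
  by rewrite /= !with_consts_idx ?groupM // fM // gmulV.
suff -> : free_gen H N (idx (y * z)) =
    free_gen H N (idx y) * free_gen H N (idx z) * ev (free_gen H N) w by rewrite coset_kerr.
by rewrite /= mulKVg.
Qed.

Let phim := Morphism phiM.

Let relator_trivial (l : fword) h : wvars l <= N -> ev (free_gen H N) l = 1 ->
  weval (noconst G) (with_consts a) l = f h -> h \in H -> h = 1.
Proof.
move=> bl l1 lh Hh.
have [b [fHb lb]] := vcH (ex_intro2 _ _ h Hh erefl) (ex_intro _ _ lh).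
have Hs i : pre (b i) \in H by have [] := preP (fHb i).
apply: finj => //; have -> : (1 : gT) = ev (fun i => pre (b i)) l.
  by rewrite (free_gen_law bl l1 Hs).
rewrite (weval_morph fM_in) // -lb; apply: weval_eq_on => i _.
by have [_ ->] := preP (fHb i).
Qed.

Let phi_injm : 'injm phim.
Proof.
apply/subsetP => y /morphpreP[Hy /set1P phi1]; apply/set1P.
have /word_valuesP[r [br r1] Er] := coset_idr (nR _) phi1.
apply: (@relator_trivial (wmul (wvar _ (idx y)) (winv r))) => //=.
- by rewrite geq_max br idx_ltN.
- by rewrite Er mulgV.
- by rewrite r1 ginv1 gmulg1 with_consts_idx.
Qed.

Let K := (phim @* H)%G.

Let K_sub_Q : K \subset P / R.
Proof.
by apply/subsetP => _ /morphimP[y _ Hy ->]; apply: mem_quotient; apply: free_gen_in.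
Qed.

Let K_nonabelian_monolith : ~~ abelian (monolith K).
Proof. exact: injm_nonabelian_monolith phi_injm (subxx H) nabH. Qed.

Let Q_laws : satisfies_identities_of K (P / R).
Proof.
move=> u v lawK; apply: (@is_law_morphim _ _ _ (coset_morphism R) P u v nRP).
by apply: free_group_law; apply: (is_law_injm (subxx H) phi_injm lawK).
Qed.

Section Retraction.
Variable rho : coset_of R -> coset_of R.
Hypothesis rhoM : {in P / R &, {morph rho : x y / x * y}}.
Hypothesis rho_id : {in P / R, forall q, rho (rho q) = rho q}.
Hypothesis rhoQ : rho @: (P / R) = K.

Let rhom := Morphism rhoM.

Let rho_in q : q \in P / R -> rho q \in K.
Proof. by rewrite -rhoQ; apply: imset_f. Qed.

Let rho_fix q : q \in K -> rho q = q.
Proof. by rewrite -rhoQ => /imsetP[q' Qq' ->]; rewrite rho_id. Qed.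

Let psi p := invm phi_injm (rho (coset R p)).

Let psiM : {in P &, {morph psi : p q / p * q}}.
Proof.
move=> p q Pp Pq; rewrite /psi morphM ?(subsetP nRP) //.
by rewrite rhoM ?mem_quotient // morphM ?rho_in ?mem_quotient.
Qed.

Let sigma j := psi (free_gen H N j).

Let sigma_idx y : y \in H -> sigma (idx y) = y.
Proof.
move=> Hy; rewrite /sigma /psi -/(phi y) rho_fix; last exact: (mem_morphim phim Hy Hy).
by rewrite -[phi y]/(phim y) invmE.
Qed.

Let psi_ev w : psi (ev (free_gen H N) w) = ev sigma w.
Proof. exact: (weval_morphism (Morphism psiM) w (free_gen_in H N)). Qed.

Let sigma_eqn_word k : ev sigma (eqn_word k) = 1.
Proof.
rewrite -psi_ev /psi coset_id.
  by rewrite -[rho 1]/(rhom 1) !morph1.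
apply: mem_word_values; split; first exact: wvars_eqn_word.
by rewrite /= -!weval_free_word sol gmulVr.
Qed.

Lemma retraction_solves : exists a' : nat -> G, (forall i, fH (a' i)) /\
  forall k, weval (@proj1_sig _ _) a' (sys k).1 = weval (@proj1_sig _ _) a' (sys k).2.
Proof.
have sigma_in j : sigma j \in H.
  rewrite /sigma /psi.
  have /morphimP[y _ Hy ->] := rho_in (mem_quotient R (free_gen_in H N j)).
  by rewrite invmE.
exists (fun i => f (sigma (n + i))); split=> [i | k]; first by exists (sigma (n + i)).
have f_sigma j : f (sigma j) = with_consts (fun i => f (sigma (n + i))) j.
  rewrite /with_consts; case: ltnP => [ltjn | lenj]; last by rewrite subnKC.
  rewrite -[j in sigma j](index_uniq 1 _ (enum_uniq (mem H))) -?cardE //.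
  by rewrite sigma_idx ?nth_enum_group.
have sigma_ev w :
    f (ev sigma w) = weval (noconst G) (with_consts (fun i => f (sigma (n + i)))) w.
  by rewrite (weval_morph fM_in) //; apply: weval_eq_on => j _; apply: f_sigma.
rewrite !weval_free_word -!sigma_ev; congr f; apply/eqP; rewrite eq_mulgV1.
exact/eqP/sigma_eqn_word.
Qed.

End Retraction.

Lemma image_system_solvable : exists a' : nat -> G, (forall i, fH (a' i)) /\
  forall k, weval (@proj1_sig _ _) a' (sys k).1 = weval (@proj1_sig _ _) a' (sys k).2.
Proof.
have [rho [rhoM [rho_id rhoQ]]] :=
  retract_of_satisfies_identities K_nonabelian_monolith K_sub_Q Q_laws.
exact: retraction_solves rhoM rho_id rhoQ.
Qed.

End StronglyVerballyClosed.

Theorem theorem1 (gT : finGroupType) (H : {group gT}) :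
  ~~ abelian (monolith H) ->
  strongly_verbally_closed (fingrp gT) (fun x => x \in H) /\
  (forall G : {group gT}, H \subset G -> satisfies_identities_of H G ->
     retract G H).
Proof.
move=> nabH; split=> [G f fM finj vcH m sys [a sol] | G sHG lawsG].
  exact: (image_system_solvable nabH fM finj vcH sol).
exact: retract_of_satisfies_identities.
Qed.
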